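(* Let $X$, $Y$, $\mathcal{E}$ be Euclidean-space-valued random variables on a probability space $(\Omega,\mathcal{F},P)$, and let $\Phi$ be a random variable measurable with respect to $\sigma(X)$. Let $\mathcal{E}_\phi\in\sigma(\mathcal{E})$ and $\mathcal{E}_\psi$ be as described in the context. If $\Phi\in\mathcal{I}$, then $\mathcal{E}_\psi$ is conditionally independent of $(\Phi,Y)$ given $\mathcal{E}_\phi$.
   Context: $\mathcal{E}_\phi$ denotes a minimal (with respect to generated $\sigma$-algebras) random variable measurable with respect to $\sigma(\mathcal{E})$ such that $\Phi$ is conditionally independent of $\mathcal{E}$ given $\mathcal{E}_\phi$ (so $P(\Phi\mid\mathcal{E})=P(\Phi\mid\mathcal{E}_\phi)$). It is assumed that there is a random variable $\mathcal{E}_\psi$, independent of $\mathcal{E}_\phi$, with $\sigma(\mathcal{E})=\sigma(\mathcal{E}_\phi,\mathcal{E}_\psi)$; accordingly each realization $\epsilon\in\mathrm{supp}(\mathcal{E})$ is written $\epsilon=(\epsilon_\phi,\epsilon_\psi)$. The set of invariant features is $\mathcal{I}=\{\Phi\in\sigma(X): p(Y\mid\Phi,\epsilon)=p(Y\mid\Phi)\ \text{for all }\epsilon\in\mathrm{supp}(\mathcal{E})\}$, assumed non-empty. *)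

From HB Require Import structures.
From mathcomp Require Import all_boot all_order all_algebra.
From mathcomp Require Import all_classical all_reals all_analysis.
Set Implicit Arguments. Unset Strict Implicit. Unset Printing Implicit Defensive.
Import Order.TTheory GRing.Theory Num.Theory.
Local Open Scope classical_set_scope.
Local Open Scope ring_scope.

(* A Euclidean-space-valued random variable with values in R^n is represented
   by its n real coordinate functions X : 'I_n -> T -> R. *)
Section Defs.
Context d (T : measurableType d) (R : realType).

Definition rv_sigma n (X : 'I_n -> T -> R) : set (set T) :=
  <<s [set X i @^-1` B | i in [set: 'I_n] & B in [set B : set R | measurable B]] >>.

Definition is_rv n (X : 'I_n -> T -> R) : Prop :=
  forall i, measurable_fun [set: T] (X i).

Definition sigma_join (G1 G2 : set (set T)) : set (set T) := <<s G1 `|` G2 >>.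

Definition G_measurable (G : set (set T)) (f : T -> R) : Prop :=
  forall B : set R, measurable B -> G (f @^-1` B).

Definition G_measurable_rv (G : set (set T)) n (X : 'I_n -> T -> R) : Prop :=
  forall i, G_measurable G (X i).

Variable P : probability T R.

Definition cond_prob_version (G : set (set T)) (A : set T) (f : T -> R) : Prop :=
  [/\ G_measurable G f,
      P.-integrable [set: T] (EFin \o f) &
      forall C, G C -> (\int[P]_(x in C) (f x)%:E = P (A `&` C))%E].

(* conditional independence of sigma-algebras G1 and G2 given H:
   P(A ∩ B | H) = P(A | H) P(B | H) a.s. for all A in G1, B in G2 *)
Definition cond_indep (G1 G2 H : set (set T)) : Prop :=
  forall A B, G1 A -> G2 B ->
    exists fA fB : T -> R,
      [/\ cond_prob_version H A fA, cond_prob_version H B fB &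
          cond_prob_version H (A `&` B) (fA \* fB)].

Definition indep (G1 G2 : set (set T)) : Prop :=
  forall A B, G1 A -> G2 B -> P (A `&` B) = (P A * P B)%E.

(* Phi is an invariant feature: p(Y | Phi, E) = p(Y | Phi), i.e. for every
   event A in sigma(Y), P(A | sigma(Phi, E)) has a sigma(Phi)-measurable version. *)
Definition invariant_feature k ny ne (Phi : 'I_k -> T -> R)
    (Y : 'I_ny -> T -> R) (E : 'I_ne -> T -> R) : Prop :=
  forall A, rv_sigma Y A ->
    exists f : T -> R, G_measurable (rv_sigma Phi) f /\
      cond_prob_version (sigma_join (rv_sigma Phi) (rv_sigma E)) A f.

End Defs.

(* Let A ∈ σ(Eψ), B ∈ σ(Φ, Y) and c = P(A). As Eψ is independent of Eφ, the
   constant c is a version of P(A | Eφ), and c times a version of P(B | Eφ) is a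
   version of P(A ∩ B | Eφ) as soon as P(A ∩ B ∩ C) = c P(B ∩ C) for every
   C ∈ σ(Eφ). Both sides are finite measures in B, so it suffices to take
   B = B1 ∩ B2 with B1 ∈ σ(Φ) and B2 ∈ σ(Y). Since A ∩ C ∈ σ(E), any version of
   P(A ∩ C | Eφ) is c 1_C almost surely, and the conditional independence of Φ
   and E given Eφ turns this into P(Y ∩ A ∩ C) = c P(Y ∩ C) for Y ∈ σ(Φ).
   Invariance of Φ provides a σ(Φ)-measurable version f of P(B2 | Φ, E), so
   P(B1 ∩ B2 ∩ A ∩ C) = ∫_(B1 ∩ A ∩ C) f = c ∫_(B1 ∩ C) f = c P(B1 ∩ B2 ∩ C). *)

From HB Require Import structures.
From mathcomp Require Import all_boot all_order all_algebra.
From mathcomp Require Import all_classical all_reals all_analysis.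
From mathcomp Require Import measurable_realfun.
Set Implicit Arguments. Unset Strict Implicit. Unset Printing Implicit Defensive.
Import Order.TTheory GRing.Theory Num.Theory.
Local Open Scope classical_set_scope.
Local Open Scope ring_scope.

Section mrestr_finite.
Context d (T : measurableType d) (R : realType).
Variables (mu : {finite_measure set T -> \bar R}) (D : set T) (mD : measurable D).

Let mrestr_fin : fin_num_fun (mrestr mu mD).
Proof. by move=> A mA; rewrite /mrestr fin_num_measure//; exact: measurableI. Qed.

HB.instance Definition _ := Measure_isFinite.Build _ _ _ (mrestr mu mD) mrestr_fin.

End mrestr_finite.

Lemma ge0_integral_mrestr d (T : measurableType d) (R : realType)
    (mu : {measure set T -> \bar R}) (D E : set T) (mD : measurable D)
    (f : T -> \bar R) :
  measurable E -> measurable_fun E f -> (forall x, E x -> (0 <= f x)%E) ->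
  (\int[mrestr mu mD]_(x in E) f x = \int[mu]_(x in E `&` D) f x)%E.
Proof.
move=> mE mf f0.
have nullC : mrestr mu mD (~` D) = 0%E by rewrite /mrestr setICl measure0.
rewrite (ge0_negligible_integral (measurableC mD) mE)// setDE setCK.
by apply: eq_measure_integral => A mA AED /=; rewrite /mrestr setIidl// => x /AED[].
Qed.

Lemma G_measurableP d (T : measurableType d) (R : realType) (G : set (set T))
    (f : T -> R) :
  G_measurable <<s G>> f <-> measurable_fun [set: g_sigma_algebraType G] f.
Proof.
split=> [fG _ B mB|mf B mB]; first by rewrite setTI; exact: fG.
by have := mf measurableT B mB; rewrite setTI.
Qed.

Section msigma.
Local Open Scope ereal_scope.
Context d (T : measurableType d) (R : realType) (G : set (set T)).
Hypothesis sGm : <<s G>> `<=` measurable.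
Local Notation S := (g_sigma_algebraType G).

Lemma measurable_id_sub : measurable_fun [set: T] (id : T -> S).
Proof. by move=> _ A /sGm; rewrite setTI. Qed.

Lemma G_measurable_measurable_fun (f : T -> R) :
  G_measurable <<s G>> f -> measurable_fun [set: T] f.
Proof. by move=> mf _ B mB; rewrite setTI; apply: sGm; exact: mf. Qed.

(* [mu] on the coarser sigma-algebra [<<s G>>]: conditional probabilities given
   [<<s G>>] are Radon-Nikodym derivatives with respect to it. *)
Definition msigma (mu : set T -> \bar R) : set S -> \bar R := fun A => mu A.

Section msigma_measure.
Variable mu : {measure set T -> \bar R}.

Let msigma0 : msigma mu set0 = 0. Proof. exact: measure0. Qed.

Let msigma_ge0 A : 0 <= msigma mu A. Proof. exact: measure_ge0. Qed.

Let msigma_sigma_additive : semi_sigma_additive (msigma mu).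
Proof.
move=> F mF tF mUF.
exact: measure_semi_sigma_additive (fun n => sGm (mF n)) tF (sGm mUF).
Qed.

HB.instance Definition _ := isMeasure.Build _ _ _ (msigma mu)
  msigma0 msigma_ge0 msigma_sigma_additive.

End msigma_measure.

Section msigma_finite_measure.
Variable mu : {finite_measure set T -> \bar R}.

Let msigma_fin : fin_num_fun (msigma mu).
Proof. by move=> A mA; exact: fin_num_measure (sGm mA). Qed.

HB.instance Definition _ := Measure_isFinite.Build _ _ _ (msigma mu) msigma_fin.

End msigma_finite_measure.

Lemma ge0_integral_msigma (mu : {measure set T -> \bar R}) (E : set T)
    (f : S -> \bar R) :
  <<s G>> E -> measurable_fun [set: S] f -> (forall x, E x -> 0 <= f x) ->
  \int[msigma mu]_(x in (E : set S)) f x = \int[mu]_(x in E) f x.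
Proof.
move=> mE mf f0.
exact: (ge0_integral_pushforward measurable_id_sub mu mE (measurable_funTS mf)
  (fun x xE => f0 x (set_mem xE))).
Qed.

Lemma integral_msigma (mu : {measure set T -> \bar R}) (E : set T)
    (f : S -> \bar R) :
  <<s G>> E -> measurable_fun [set: S] f ->
  \int[msigma mu]_(x in (E : set S)) f x = \int[mu]_(x in E) f x.
Proof.
move=> mE mf; rewrite [LHS]integralE [RHS]integralE.
by rewrite !ge0_integral_msigma//; [exact: measurable_funeneg|exact: measurable_funepos].
Qed.

Lemma integrable_msigma (mu : {measure set T -> \bar R}) (f : S -> \bar R) :
  measurable_fun [set: S] f ->
  (msigma mu).-integrable [set: S] f <-> mu.-integrable [set: T] f.
Proof.
move=> mf; have mfT : measurable_fun [set: T] f := measurableT_comp mf measurable_id_sub.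
have absE : \int[msigma mu]_(x in [set: S]) `|f x| = \int[mu]_(x in [set: T]) `|f x|.
  apply: ge0_integral_msigma => //; first exact: (@measurableT _ S).
  exact: measurableT_comp.
split=> /integrableP[_ fi]; apply/integrableP; split=> //.
  by rewrite -absE.
by rewrite absE.
Qed.

Lemma sub_sigma_integral_ae_eq (mu : {measure set T -> \bar R}) (f g : S -> R) :
  measurable_fun [set: S] f -> measurable_fun [set: S] g ->
  mu.-integrable [set: T] (EFin \o f) ->
  (forall C, <<s G>> C ->
    \int[mu]_(x in C) (f x)%:E = \int[mu]_(x in C) (g x)%:E) ->
  ae_eq mu [set: T] (EFin \o f) (EFin \o g).
Proof.
move=> mf mg fi fg.
have mfE : measurable_fun [set: S] (EFin \o f) by exact/measurable_EFinP.
have mgE : measurable_fun [set: S] (EFin \o g) by exact/measurable_EFinP.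
have fiS : (msigma mu).-integrable [set: S] (EFin \o f) by exact/integrable_msigma.
have [N [mN N0 fgN]] : ae_eq (msigma mu) [set: S] (EFin \o f) (EFin \o g).
  by apply: integral_ae_eq => // C _ mC; rewrite !integral_msigma //; exact: fg.
by exists N; split => //; exact: sGm.
Qed.

Lemma cond_prob_version_exists (P : probability T R) (B : set T) :
  measurable B -> exists f : T -> R, cond_prob_version P <<s G>> B f.
Proof.
move=> mB; pose nu := msigma (mrestr P mB).
have nu_ac : nu `<< msigma P.
  apply/null_content_dominatesP => A mA PA0; apply/eqP.
  rewrite eq_le measure_ge0 andbT -PA0 /= /msigma /mrestr.
  apply: le_measure; rewrite ?inE; last exact: subIsetl.
    exact: measurableI (sGm mA) mB.
  exact: sGm.
pose rn := Radon_Nikodym_SigmaFinite.f nu (msigma P).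
have rn_int := Radon_Nikodym_SigmaFinite.f_integrable nu_ac.
have rnE := Radon_Nikodym_SigmaFinite.f_integral nu_ac.
have rnD : EFin \o (fine \o rn) = rn.
  by apply/funext => x /=; rewrite fineK// Radon_Nikodym_SigmaFinite.f_fin_num.
have mrn : measurable_fun [set: S] (fine \o rn).
  by apply/measurable_EFinP; rewrite rnD; exact: measurable_int rn_int.
have mrnE : measurable_fun [set: S] (EFin \o (fine \o rn)) by exact/measurable_EFinP.
exists (fine \o rn); split.
- exact/G_measurableP.
- by apply/(integrable_msigma _ mrnE); rewrite rnD.
- move=> C mC; rewrite -(integral_msigma _ mC mrnE).
  by rewrite rnD -rnE// /nu /msigma /mrestr /= setIC.
Qed.

Lemma eq_measure_ge0_integral_sub (mu1 mu2 : {measure set T -> \bar R})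
    (E : set T) (f : S -> \bar R) :
  (forall A, <<s G>> A -> mu1 A = mu2 A) ->
  <<s G>> E -> measurable_fun [set: S] f -> (forall x, E x -> 0 <= f x) ->
  \int[mu1]_(x in E) f x = \int[mu2]_(x in E) f x.
Proof.
move=> mu12 mE mf f0; rewrite -!ge0_integral_msigma//.
by apply: eq_measure_integral => A mA _; exact: mu12.
Qed.

Lemma integral_setI_proportional (mu : {measure set T -> \bar R}) (D1 D2 : set T)
    (c : R) : measurable D1 -> measurable D2 -> (0 <= c)%R ->
  (forall A, <<s G>> A -> mu (A `&` D1) = c%:E * mu (A `&` D2)) ->
  forall (E : set T) (f : S -> \bar R), <<s G>> E -> measurable_fun [set: S] f ->
  mu.-integrable (E `&` D2) f ->
  \int[mu]_(x in E `&` D1) f x = c%:E * \int[mu]_(x in E `&` D2) f x.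
Proof.
move=> mD1 mD2 c0 muD12 E f mE mf fi.
have mET := sGm mE.
have ge0_prop (h : S -> \bar R) : measurable_fun [set: S] h -> (forall x, 0 <= h x) ->
    \int[mu]_(x in E `&` D1) h x = c%:E * \int[mu]_(x in E `&` D2) h x.
  move=> mh h0; have mhT := measurableT_comp mh measurable_id_sub.
  rewrite -!ge0_integral_mrestr//; [|exact: measurable_funTS..].
  rewrite -(ge0_integral_mscale (mrestr mu mD2) mET (NngNum c0))//.
    by apply: eq_measure_ge0_integral_sub => // A mA; exact: muD12.
  exact: measurable_funTS.
rewrite [LHS]integralE [X in _ = _ * X]integralE.
rewrite !ge0_prop; [|exact: measurable_funeneg|by []|exact: measurable_funepos|by []].
have fin_neg := integrable_neg_fin_num (measurableI _ _ mET mD2) fi.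
by rewrite -muleBr// fin_num_adde_defl// fin_numN.
Qed.

End msigma.

Lemma rv_sigma_measurable d (T : measurableType d) (R : realType) n
    (X : 'I_n -> T -> R) :
  is_rv X -> rv_sigma X `<=` measurable.
Proof.
move=> mX; apply: smallest_sub; first exact: sigma_algebra_measurable.
by move=> _ [i _ [B mB <-]]; rewrite -[_ @^-1` _]setTI; exact: mX.
Qed.

Lemma rv_sigma_sub d (T : measurableType d) (R : realType) (H : set (set T)) n
    (Z : 'I_n -> T -> R) :
  sigma_algebra [set: T] H -> G_measurable_rv H Z -> rv_sigma Z `<=` H.
Proof. by move=> sH mZ; apply: smallest_sub => // _ [i _ [B mB <-]]; exact: mZ. Qed.

Lemma sigma_join_measure_unique d (T : measurableType d) (R : realType)
    (K1 K2 : set (set T)) (m1 : {finite_measure set T -> \bar R})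
    (m2 : {measure set T -> \bar R}) :
  <<s K1>> `<=` measurable -> <<s K2>> `<=` measurable ->
  (forall B1 B2, <<s K1>> B1 -> <<s K2>> B2 -> m1 (B1 `&` B2) = m2 (B1 `&` B2)) ->
  forall B, sigma_join <<s K1>> <<s K2>> B -> m1 B = m2 B.
Proof.
move=> sK1m sK2m m12.
pose Pi := [set B1 `&` B2 | B1 in <<s K1>> & B2 in <<s K2>>].
have Pim : Pi `<=` measurable.
  by move=> _ [B1 /sK1m mB1 [B2 /sK2m mB2 <-]]; exact: measurableI.
have PiI : setI_closed Pi.
  move=> _ _ [B1 h1 [B2 h2 <-]] [B1' h1' [B2' h2' <-]].
  exists (B1 `&` B1'); first exact: (@measurableI _ (g_sigma_algebraType K1)).
  exists (B2 `&` B2'); first exact: (@measurableI _ (g_sigma_algebraType K2)).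
  by rewrite setIACA.
have K1T : <<s K1>> [set: T] := @measurableT _ (g_sigma_algebraType K1).
have K2T : <<s K2>> [set: T] := @measurableT _ (g_sigma_algebraType K2).
have join_Pi : sigma_join <<s K1>> <<s K2>> `<=` <<s Pi>>.
  apply: smallest_sub; first exact: smallest_sigma_algebra.
  move=> B [h|h]; apply: sub_sigma_algebra.
  - by exists B => //; exists setT; rewrite ?setIT.
  - by exists setT => //; exists B; rewrite ?setTI.
move=> B /join_Pi; apply: (g_sigma_algebra_measure_unique Pi Pim (fun=> setT)).
- by move=> _; exists setT => //; exists setT; rewrite ?setIT.
- by rewrite bigcup_const.
- exact: PiI.
- by move=> _ [B1 h1 [B2 h2 <-]]; exact: m12.
- by move=> _; rewrite ltey_eq fin_num_measure.
Qed.

Section conditional_probability.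
Local Open Scope ereal_scope.
Context d (T : measurableType d) (R : realType) (P : probability T R).
Variable K : set (set T).
Hypothesis sKm : <<s K>> `<=` measurable.

Lemma cond_prob_version_indep (A : set T) : measurable A ->
  (forall C, <<s K>> C -> P (C `&` A) = P C * P A) ->
  cond_prob_version P <<s K>> A (cst (fine (P A))).
Proof.
move=> mA indepA; split.
- by apply/G_measurableP; exact: measurable_cst.
- exact: finite_measure_integrable_cst.
- move=> C mC; rewrite -[fun x => _]/(cst (fine (P A))%:E) integral_cst; last exact: sKm.
  by rewrite fineK ?fin_num_measure// setIC indepA// muleC.
Qed.

Lemma cond_prob_versionZ (A B : set T) (c : R) (f : T -> R) :
  cond_prob_version P <<s K>> B f ->
  (forall C, <<s K>> C -> P (A `&` B `&` C) = c%:E * P (B `&` C)) ->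
  cond_prob_version P <<s K>> (A `&` B) (cst c \* f)%R.
Proof.
move=> [mf fi fE] ABC; have EFinM_f : EFin \o (cst c \* f)%R = (fun x => c%:E * (f x)%:E).
  by apply/funext => x; rewrite /= EFinM.
split.
- apply/G_measurableP; apply: measurable_funM; first exact: measurable_cst.
  exact/G_measurableP.
- by rewrite EFinM_f; exact: integrableZl.
- move=> C mC; rewrite -[fun x => _]/(EFin \o (cst c \* f)%R) EFinM_f.
  rewrite integralZl; [by rewrite fE// ABC|exact: sKm|].
  exact: integrableS (sKm mC) _ fi.
Qed.

Lemma cond_prob_version_indep_setI_ae (A C : set T) (f : T -> R) :
  measurable A -> (forall C', <<s K>> C' -> P (C' `&` A) = P C' * P A) ->
  <<s K>> C -> cond_prob_version P <<s K>> (A `&` C) f ->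
  ae_eq P [set: T] (EFin \o f) (EFin \o (fun x => fine (P A) * \1_C x)%R).
Proof.
move=> mA indepA mC [mf fi fE].
have c0 : (0 <= fine (P A))%R by rewrite fine_ge0.
apply: (sub_sigma_integral_ae_eq sKm) => //.
- exact/G_measurableP.
- apply: measurable_funM; first exact: measurable_cst.
  exact: (@measurable_indic _ (g_sigma_algebraType K)).
- move=> C' mC'; have mC'T := sKm mC'; have mCT := sKm mC.
  rewrite fE//; under eq_integral do rewrite EFinM.
  rewrite ge0_integralZl ?lee_fin//; last first.
    exact/measurable_EFinP/measurable_funTS/measurable_indic.
  rewrite integral_indic// fineK ?fin_num_measure//.
  rewrite muleC -indepA; last exact: (@measurableI _ (g_sigma_algebraType K)).
  by rewrite -setIA setIC.
Qed.

Lemma cond_indep_setI_indep (G1 G2 : set (set T)) (A C : set T) :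
  measurable A -> (forall C', <<s K>> C' -> P (C' `&` A) = P C' * P A) ->
  cond_indep P G1 G2 <<s K>> -> <<s K>> C -> G2 (A `&` C) ->
  forall Y, G1 Y -> P (Y `&` (A `&` C)) = (fine (P A))%:E * P (Y `&` C).
Proof.
move=> mA indepA G12 mC G2AC Y G1Y.
have [fY [fAC [[mfY fYi fYE] vAC [_ _ fYACE]]]] := G12 Y _ G1Y G2AC.
have fAC_ae := cond_prob_version_indep_setI_ae mA indepA mC vAC.
have mCT := sKm mC.
have mfYT := G_measurable_measurable_fun sKm mfY.
have mfACT := G_measurable_measurable_fun sKm (let: And3 mfAC _ _ := vAC in mfAC).
have -> : Y `&` (A `&` C) = Y `&` (A `&` C) `&` C by rewrite -!setIA setIid.
rewrite -fYACE//.
rewrite (@ae_eq_integral _ _ _ P C (fun x => (fine (P A) * fY x)%:E))//.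
- under eq_integral do rewrite EFinM.
  by rewrite integralZl//; [rewrite fYE|exact: integrableS fYi].
- exact/measurable_EFinP/measurable_funTS/measurable_funM.
- exact/measurable_EFinP/measurable_funTS/measurable_funM.
- move: fAC_ae; apply: filterS => x /= /(_ I) [fACE] Cx.
  by rewrite fACE indicE mem_set// mulr1 mulrC.
Qed.

End conditional_probability.

Section invariant_feature.
Local Open Scope ereal_scope.
Context d (T : measurableType d) (R : realType) (P : probability T R).

Lemma setI_proportional_invariant (K1 H : set (set T)) (B2 D1 D2 : set T)
    (c : R) (f : T -> R) :
  <<s K1>> `<=` measurable -> measurable D1 -> measurable D2 -> (0 <= c)%R ->
  (forall Y, <<s K1>> Y -> P (Y `&` D1) = c%:E * P (Y `&` D2)) ->
  H D1 -> H D2 ->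
  G_measurable <<s K1>> f -> cond_prob_version P (sigma_join <<s K1>> H) B2 f ->
  forall B1, <<s K1>> B1 -> P (B1 `&` B2 `&` D1) = c%:E * P (B1 `&` B2 `&` D2).
Proof.
move=> sK1m mD1 mD2 c0 propD HD1 HD2 mf [_ fi fE] B1 K1B1.
have joinI D : H D -> sigma_join <<s K1>> H (B1 `&` D).
  by move=> HD; apply: (@measurableI _ (g_sigma_algebraType _));
    apply: sub_sigma_algebra; [left|right].
have setI_swap D : B1 `&` B2 `&` D = B2 `&` (B1 `&` D) by rewrite (setIC B1) setIA.
rewrite !setI_swap -!fE; [|exact: joinI..].
apply: (integral_setI_proportional sK1m) => //.
- exact/measurable_EFinP/G_measurableP.
- apply: integrableS fi => //; apply: measurableI mD2; exact: sK1m.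
Qed.

Lemma indep_setI_sigma_join (K KPhi KY H : set (set T)) (A C : set T) :
  <<s K>> `<=` measurable -> <<s KPhi>> `<=` measurable -> <<s KY>> `<=` measurable ->
  measurable A -> (forall C', <<s K>> C' -> P (C' `&` A) = P C' * P A) ->
  cond_indep P <<s KPhi>> H <<s K>> ->
  (forall B2, <<s KY>> B2 -> exists f : T -> R, G_measurable <<s KPhi>> f /\
     cond_prob_version P (sigma_join <<s KPhi>> H) B2 f) ->
  <<s K>> C -> H C -> H (A `&` C) ->
  forall B, sigma_join <<s KPhi>> <<s KY>> B ->
    P (A `&` B `&` C) = (fine (P A))%:E * P (B `&` C).
Proof.
move=> sKm sKPhim sKYm mA indepA PhiH_K invY KC HC HAC B joinB.
have c0 : (0 <= fine (P A))%R by rewrite fine_ge0.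
have mC := sKm _ KC; have mAC := measurableI _ _ mA mC.
have propAC := cond_indep_setI_indep sKm mA indepA PhiH_K KC HAC.
rewrite (setIC A) -setIA.
apply: (sigma_join_measure_unique (m1 := mrestr P mAC)
  (m2 := mscale (NngNum c0) (mrestr P mC)) sKPhim sKYm _ joinB) => B1 B2 KB1 KB2.
have [f [mf vf]] := invY B2 KB2.
exact: setI_proportional_invariant sKPhim mAC mC c0 propAC HAC HC mf vf B1 KB1.
Qed.

End invariant_feature.

Theorem lemma1 (d : measure_display) (T : measurableType d) (R : realType)
  (P : probability T R)
  (nx ny ne k nphi npsi : nat)
  (X : 'I_nx -> T -> R) (Y : 'I_ny -> T -> R) (E : 'I_ne -> T -> R)
  (Phi : 'I_k -> T -> R)
  (Ephi : 'I_nphi -> T -> R) (Epsi : 'I_npsi -> T -> R) :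
  is_rv X -> is_rv Y -> is_rv E ->
  (* Phi is sigma(X)-measurable *)
  G_measurable_rv (rv_sigma X) Phi ->
  (* Ephi is sigma(E)-measurable, Phi ⊥ E | Ephi, and Ephi is minimal with this property *)
  G_measurable_rv (rv_sigma E) Ephi ->
  cond_indep P (rv_sigma Phi) (rv_sigma E) (rv_sigma Ephi) ->
  (forall (m : nat) (Z : 'I_m -> T -> R),
      G_measurable_rv (rv_sigma E) Z ->
      cond_indep P (rv_sigma Phi) (rv_sigma E) (rv_sigma Z) ->
      rv_sigma Z `<=` rv_sigma Ephi -> rv_sigma Z = rv_sigma Ephi) ->
  (* Epsi independent of Ephi, sigma(E) = sigma(Ephi, Epsi) *)
  is_rv Epsi ->
  indep P (rv_sigma Ephi) (rv_sigma Epsi) ->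
  rv_sigma E = sigma_join (rv_sigma Ephi) (rv_sigma Epsi) ->
  (* Phi is an invariant feature *)
  invariant_feature P Phi Y E ->
  cond_indep P (rv_sigma Epsi) (sigma_join (rv_sigma Phi) (rv_sigma Y))
    (rv_sigma Ephi).
Proof.
move=> mX mY mE PhiX EphiE PhiE_Ephi _ mEpsi indepEphi E_join inv A B EpsiA PhiYB.
have Ephi_E := rv_sigma_sub (smallest_sigma_algebra _ _) EphiE.
have sEphim := subset_trans Ephi_E (rv_sigma_measurable mE).
have sPhim := subset_trans (rv_sigma_sub (smallest_sigma_algebra _ _) PhiX)
  (rv_sigma_measurable mX).
have mA := rv_sigma_measurable mEpsi EpsiA.
have mB : measurable B.
  move: PhiYB; apply: smallest_sub; first exact: sigma_algebra_measurable.
  by move=> ? [/sPhim|/(rv_sigma_measurable mY)].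
have E_EpsiI C : rv_sigma Ephi C -> rv_sigma E (A `&` C).
  by move=> EphiC; rewrite E_join; apply: (@measurableI _ (g_sigma_algebraType _));
    apply: sub_sigma_algebra; [right|left].
have [fB vB] := cond_prob_version_exists sEphim P mB.
exists (cst (fine (P A))), fB; split => //.
- by apply: (cond_prob_version_indep sEphim) => // C EphiC; exact: indepEphi.
- apply: (cond_prob_versionZ sEphim vB) => C EphiC.
  apply: (indep_setI_sigma_join (H := rv_sigma E) sEphim sPhim
    (rv_sigma_measurable mY) mA _ PhiE_Ephi inv EphiC (Ephi_E _ EphiC)
    (E_EpsiI _ EphiC)) => //.
  by move=> C' EphiC'; exact: indepEphi.
Qed.
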